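(* Let $\triangle ABC$ be a nondegenerate triangle circumscribed about a central conic with semi-axes $a$ and $b$, $a$ being the semi-axis along the focal axis, one of whose foci coincides with the circumcenter of $\triangle ABC$. Let $H$ be the orthocenter of $\triangle ABC$. Then $|AH|\,|BH|\,|CH|=8ab^2$.
   Context: A central conic is a non-degenerate ellipse or hyperbola. For a hyperbola, $a$ is the semi-transverse axis and $b$ the semi-conjugate axis, so that $a^2+b^2=c^2$ with $c$ half the focal distance. A triangle is circumscribed about a conic if each of its three sidelines is tangent to the conic. *)

From Stdlib Require Import Reals.
Open Scope R_scope.

Definition pt := (R * R)%type.
Definition vsub (P Q : pt) : pt := (fst P - fst Q, snd P - snd Q).
Definition vadd (P Q : pt) : pt := (fst P + fst Q, snd P + snd Q).
Definition vscale (t : R) (P : pt) : pt := (t * fst P, t * snd P).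
Definition dot (P Q : pt) : R := fst P * fst Q + snd P * snd Q.
Definition cross (P Q : pt) : R := fst P * snd Q - snd P * fst Q.
Definition perp (u : pt) : pt := (- snd u, fst u).
Definition pdist (P Q : pt) : R := sqrt (dot (vsub P Q) (vsub P Q)).

Definition nondegenerate (A B C : pt) : Prop := cross (vsub B A) (vsub C A) <> 0.

(* A central conic, given by: kind e (true = ellipse, false = hyperbola),
   center O, unit vector u along the focal axis, semi-axes a (along the
   focal axis) and b.  In the frame (O; u, perp u) its equation is
   x^2/a^2 + y^2/b^2 = 1 (ellipse) or x^2/a^2 - y^2/b^2 = 1 (hyperbola). *)
Definition central_conic (e : bool) (O u : pt) (a b : R) : Prop :=
  0 < a /\ 0 < b /\ dot u u = 1 /\ (e = true -> b <= a).

Definition sgn (e : bool) : R := if e then 1 else -1.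

Definition lx (O u X : pt) : R := dot (vsub X O) u.
Definition ly (O u X : pt) : R := dot (vsub X O) (perp u).

Definition on_conic (e : bool) (O u : pt) (a b : R) (X : pt) : Prop :=
  (lx O u X) ^ 2 / a ^ 2 + sgn e * (ly O u X) ^ 2 / b ^ 2 = 1.

Definition focal_c (e : bool) (a b : R) : R :=
  sqrt (if e then a ^ 2 - b ^ 2 else a ^ 2 + b ^ 2).

Definition is_focus (e : bool) (O u : pt) (a b : R) (F : pt) : Prop :=
  F = vadd O (vscale (focal_c e a b) u) \/ F = vadd O (vscale (- focal_c e a b) u).

Definition on_line (P Q X : pt) : Prop := exists t : R, X = vadd P (vscale t (vsub Q P)).

(* The line PQ (P <> Q) is tangent to the conic: it passes through a point X
   of the conic at which the direction Q - P is orthogonal to the gradient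
   of the defining quadratic function. *)
Definition tangent_line (e : bool) (O u : pt) (a b : R) (P Q : pt) : Prop :=
  P <> Q /\
  exists X : pt, on_line P Q X /\ on_conic e O u a b X /\
    (lx O u X / a ^ 2) * dot (vsub Q P) u
    + sgn e * (ly O u X / b ^ 2) * dot (vsub Q P) (perp u) = 0.

Definition circumscribed (e : bool) (O u : pt) (a b : R) (A B C : pt) : Prop :=
  tangent_line e O u a b A B /\ tangent_line e O u a b B C /\
  tangent_line e O u a b C A.

Definition is_circumcenter (A B C X : pt) : Prop :=
  pdist X A = pdist X B /\ pdist X B = pdist X C.

Definition is_orthocenter (A B C H : pt) : Prop :=
  dot (vsub H A) (vsub B C) = 0 /\ dot (vsub H B) (vsub C A) = 0 /\
  dot (vsub H C) (vsub A B) = 0.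

(* The pedal circle of a central conic with respect to a focus is its auxiliary
   circle: the foot of the perpendicular from a focus to any tangent lies on the
   circle of radius a about the centre.  When the focus is the circumcentre, these
   feet are the midpoints of the sides, so the nine-point circle is the auxiliary
   circle.  Its centre, the centre of the conic, is then the midpoint of the focus
   F and the orthocentre H, and the circumradius is 2a.  Taking the centre of the
   conic as origin, A - H = 2 (M_B + M_C) for the side midpoints M_A, M_B, M_C,
   and for any three vectors of squared length r in the plane,
   |M_B + M_C|^2 |M_C + M_A|^2 |M_A + M_B|^2 = r (r - |M_A + M_B + M_C|^2)^2.
   Here r = a^2 and M_A + M_B + M_C = F, so r - |F|^2 = +-b^2. *)

From Stdlib Require Import Reals Lra Psatz.
Open Scope R_scope.

Definition origin : pt := (0, 0).
Definition xaxis : pt := (1, 0).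
Definition midpoint (P Q : pt) : pt := vscale (1 / 2) (vadd P Q).
Definition coords (O u X : pt) : pt := (lx O u X, ly O u X).

(* The gradient of the conic's quadratic form at X, scaled by 1/2. *)
Definition conic_normal (e : bool) (a b : R) (X : pt) : pt :=
  (fst X / a ^ 2, sgn e * snd X / b ^ 2).

Ltac pt_field :=
  intros;
  unfold origin, xaxis, midpoint, coords, lx, ly,
    vsub, vadd, vscale, dot, cross, perp;
  cbn [fst snd];
  first [apply injective_projections; cbn [fst snd]; field | field].

Lemma dot_comm (P Q : pt) : dot P Q = dot Q P.
Proof. pt_field. Qed.

Lemma dot_self_nonneg (P : pt) : 0 <= dot P P.
Proof. destruct P as [x y]; unfold dot; simpl; nra. Qed.

Lemma dot_self_eq0 (P : pt) : dot P P = 0 -> P = origin.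
Proof.
  destruct P as [x y]; unfold dot, origin; simpl; intro H.
  assert (x = 0) by nra; assert (y = 0) by nra; subst; reflexivity.
Qed.

Lemma vsub_eq0 (P Q : pt) : vsub P Q = origin -> P = Q.
Proof.
  destruct P as [p1 p2], Q as [q1 q2]; unfold vsub, origin; simpl.
  intro E; injection E as E1 E2; f_equal; lra.
Qed.

Lemma lagrange_identity (g w : pt) :
  dot g g * dot w w = dot g w ^ 2 + cross g w ^ 2.
Proof. pt_field. Qed.

Lemma orthogonal_pair (d v w : pt) :
  dot d v = 0 -> dot d w = 0 -> cross v w = 0 \/ d = origin.
Proof.
  intros Hv Hw.
  destruct (Req_dec (cross v w) 0) as [E | E]; [now left | right].
  assert (Hscale : vscale (cross v w) d
                   = vsub (vscale (dot d w) (perp v)) (vscale (dot d v) (perp w)))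
    by pt_field.
  rewrite Hv, Hw in Hscale.
  destruct d as [d1 d2]; unfold vscale, vsub, perp, origin in *; simpl in *.
  injection Hscale as E1 E2.
  f_equal; apply (Rmult_eq_reg_l (cross v w)); lra.
Qed.

Lemma pdist_eq_sq (P Q R S : pt) :
  pdist P Q = pdist R S -> dot (vsub P Q) (vsub P Q) = dot (vsub R S) (vsub R S).
Proof. apply sqrt_inj; apply dot_self_nonneg. Qed.

Lemma sqrt_prod3 (x y z k : R) :
  0 <= x -> 0 <= y -> 0 <= z -> 0 <= k -> x * y * z = k ^ 2 ->
  sqrt x * sqrt y * sqrt z = k.
Proof.
  intros Hx Hy Hz Hk E.
  rewrite <- sqrt_mult_alt, <- sqrt_mult_alt by nra.
  now rewrite E, sqrt_pow2.
Qed.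

Lemma on_line_dot (P Q X M g : pt) :
  on_line P Q X -> on_line P Q M -> dot g (vsub Q P) = 0 -> dot g M = dot g X.
Proof.
  intros [t ->] [s ->] Hg.
  assert (Hlin : forall r, dot g (vadd P (vscale r (vsub Q P)))
                           = dot g P + r * dot g (vsub Q P)) by pt_field.
  rewrite !Hlin, Hg; ring.
Qed.

Lemma dot_self_pos (g M : pt) : dot g M = 1 -> 0 < dot g g.
Proof.
  intro HM.
  destruct (Rle_lt_or_eq _ _ (dot_self_nonneg g)) as [Hlt | E]; [exact Hlt |].
  symmetry in E; apply dot_self_eq0 in E; subst g.
  unfold origin, dot in HM; cbn [fst snd] in HM; lra.
Qed.

Lemma foot_on_line_norm (g M F : pt) :
  dot g M = 1 -> cross g (vsub M F) = 0 ->
  dot g g * dot M M = dot g g * dot F F + 1 - dot g F ^ 2.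
Proof.
  intros HM Hpar.
  assert (Hcross : cross g M = cross g F + cross g (vsub M F)) by pt_field.
  rewrite !lagrange_identity, HM, Hcross, Hpar; ring.
Qed.

Lemma cross_sides (A B C : pt) :
  cross (vsub B C) (vsub C A) = cross (vsub B A) (vsub C A).
Proof. pt_field. Qed.

Lemma orthocenter_eq (A B C F H : pt) :
  nondegenerate A B C -> is_circumcenter A B C F -> is_orthocenter A B C H ->
  H = vsub (vadd A (vadd B C)) (vscale 2 F).
Proof.
  intros Hnd [HAB HBC] [HA [HB _]].
  apply pdist_eq_sq in HAB; apply pdist_eq_sq in HBC.
  set (d := vsub H (vsub (vadd A (vadd B C)) (vscale 2 F))).
  assert (HdBC : dot d (vsub B C) = 0).
  { assert (E : dot d (vsub B C) = dot (vsub H A) (vsub B C)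
                  + dot (vsub F C) (vsub F C) - dot (vsub F B) (vsub F B))
      by (unfold d; pt_field).
    rewrite E, HA; lra. }
  assert (HdCA : dot d (vsub C A) = 0).
  { assert (E : dot d (vsub C A) = dot (vsub H B) (vsub C A)
                  + dot (vsub F A) (vsub F A) - dot (vsub F C) (vsub F C))
      by (unfold d; pt_field).
    rewrite E, HB; lra. }
  destruct (orthogonal_pair d _ _ HdBC HdCA) as [E | E].
  - now rewrite cross_sides in E.
  - now apply vsub_eq0.
Qed.

Lemma circumcenter_eq_of_medial (A B C F : pt) :
  nondegenerate A B C -> is_circumcenter A B C F ->
  dot (midpoint B C) (midpoint B C) = dot (midpoint C A) (midpoint C A) ->
  dot (midpoint C A) (midpoint C A) = dot (midpoint A B) (midpoint A B) ->
  F = vadd A (vadd B C).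
Proof.
  intros Hnd [HAB HBC] HMA HMB.
  apply pdist_eq_sq in HAB; apply pdist_eq_sq in HBC.
  set (d := vsub F (vadd A (vadd B C))).
  assert (HdBC : dot d (vsub B C) = 0).
  { assert (E : 2 * dot d (vsub B C) = dot (vsub F C) (vsub F C) - dot (vsub F B) (vsub F B)
                  + 4 * (dot (midpoint C A) (midpoint C A) - dot (midpoint A B) (midpoint A B)))
      by (unfold d; pt_field).
    lra. }
  assert (HdCA : dot d (vsub C A) = 0).
  { assert (E : 2 * dot d (vsub C A) = dot (vsub F A) (vsub F A) - dot (vsub F C) (vsub F C)
                  + 4 * (dot (midpoint A B) (midpoint A B) - dot (midpoint B C) (midpoint B C)))
      by (unfold d; pt_field).
    lra. }
  destruct (orthogonal_pair d _ _ HdBC HdCA) as [E | E].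
  - now rewrite cross_sides in E.
  - now apply vsub_eq0.
Qed.

Lemma gram_det_planar (P Q S : pt) :
  dot P P * dot Q Q * dot S S + 2 * dot P Q * dot P S * dot Q S
  - dot P P * dot Q S ^ 2 - dot Q Q * dot P S ^ 2 - dot S S * dot P Q ^ 2 = 0.
Proof. pt_field. Qed.

Lemma chord_sum_product (P Q S : pt) (r : R) :
  dot P P = r -> dot Q Q = r -> dot S S = r ->
  dot (vadd Q S) (vadd Q S) * dot (vadd S P) (vadd S P) * dot (vadd P Q) (vadd P Q)
  = r * (r - dot (vadd P (vadd Q S)) (vadd P (vadd Q S))) ^ 2.
Proof.
  intros HP HQ HS.
  assert (G := gram_det_planar P Q S).
  assert (Hsum : forall X Y, dot (vadd X Y) (vadd X Y) = dot X X + dot Y Y + 2 * dot X Y)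
    by pt_field.
  assert (Hsum3 : dot (vadd P (vadd Q S)) (vadd P (vadd Q S))
                  = dot P P + dot Q Q + dot S S + 2 * (dot P Q + dot P S + dot Q S))
    by pt_field.
  assert (HSP : dot S P = dot P S) by pt_field.
  rewrite Hsum3, !Hsum, HSP, HP, HQ, HS in *.
  nra.
Qed.

Lemma coords_dot (O u P Q R S : pt) :
  dot (vsub (coords O u P) (coords O u Q)) (vsub (coords O u R) (coords O u S))
  = dot u u * dot (vsub P Q) (vsub R S).
Proof. pt_field. Qed.

Lemma coords_cross (O u P Q R S : pt) :
  cross (vsub (coords O u P) (coords O u Q)) (vsub (coords O u R) (coords O u S))
  = dot u u * cross (vsub P Q) (vsub R S).
Proof. pt_field. Qed.

Lemma pdist_coords (O u P Q : pt) :
  dot u u = 1 -> pdist (coords O u P) (coords O u Q) = pdist P Q.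
Proof. intro Hu; unfold pdist; now rewrite coords_dot, Hu, Rmult_1_l. Qed.

Lemma coords_inj (O u P Q : pt) :
  dot u u = 1 -> coords O u P = coords O u Q -> P = Q.
Proof.
  intros Hu E.
  assert (H0 : dot (vsub P Q) (vsub P Q) = 0).
  { rewrite <- (Rmult_1_l (dot _ _)), <- Hu, <- (coords_dot O u), E; pt_field. }
  now apply vsub_eq0, dot_self_eq0.
Qed.

Lemma lx_std (X : pt) : lx origin xaxis X = fst X.
Proof. pt_field. Qed.

Lemma ly_std (X : pt) : ly origin xaxis X = snd X.
Proof. pt_field. Qed.

Lemma tangent_line_coords (e : bool) (O u : pt) (a b : R) (P Q : pt) :
  dot u u = 1 -> tangent_line e O u a b P Q ->
  tangent_line e origin xaxis a b (coords O u P) (coords O u Q).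
Proof.
  intros Hu [HPQ [X [[t ->] [Hc Hg]]]]; split.
  - intro E; apply HPQ; exact (coords_inj O u P Q Hu E).
  - exists (coords O u (vadd P (vscale t (vsub Q P)))); split; [exists t; pt_field |].
    unfold on_conic; rewrite lx_std, ly_std; split; [exact Hc |].
    assert (Ex : dot (vsub (coords O u Q) (coords O u P)) xaxis = dot (vsub Q P) u)
      by pt_field.
    assert (Ey : dot (vsub (coords O u Q) (coords O u P)) (perp xaxis) = dot (vsub Q P) (perp u))
      by pt_field.
    rewrite Ex, Ey; exact Hg.
Qed.

Lemma focal_c_sq (e : bool) (a b : R) :
  0 <= b -> (e = true -> b <= a) -> focal_c e a b ^ 2 = a ^ 2 - sgn e * b ^ 2.
Proof.
  intros Hb Hab; unfold focal_c; rewrite pow2_sqrt.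
  - destruct e; simpl; ring.
  - destruct e; [specialize (Hab eq_refl) |]; nra.
Qed.

Lemma focus_coords (e : bool) (O u : pt) (a b : R) (F : pt) :
  central_conic e O u a b -> is_focus e O u a b F ->
  snd (coords O u F) = 0 /\ fst (coords O u F) ^ 2 = a ^ 2 - sgn e * b ^ 2.
Proof.
  intros [_ [Hb [Hu Hab]]] HF; rewrite <- (focal_c_sq e a b (Rlt_le _ _ Hb) Hab).
  assert (Hc : forall c, coords O u (vadd O (vscale c u)) = (c * dot u u, 0)) by pt_field.
  destruct HF as [-> | ->]; rewrite Hc, Hu; cbn [fst snd]; split; ring.
Qed.

Section StandardPosition.

Variables (e : bool) (a b : R) (F : pt).
Hypotheses (Ha : 0 < a) (Hb : 0 < b).
Hypotheses (HFy : snd F = 0) (HFx : fst F ^ 2 = a ^ 2 - sgn e * b ^ 2).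

Lemma tangent_line_std (P Q : pt) :
  tangent_line e origin xaxis a b P Q ->
  P <> Q /\ exists X, on_line P Q X /\
    dot (conic_normal e a b X) X = 1 /\ dot (conic_normal e a b X) (vsub Q P) = 0.
Proof.
  intros [HPQ [X [HX [Hc Hg]]]].
  unfold on_conic in Hc; rewrite lx_std, ly_std in Hc, Hg.
  split; [exact HPQ | exists X; split; [exact HX | split]].
  - rewrite <- Hc; destruct X; unfold conic_normal, dot, Rdiv; simpl; ring.
  - rewrite <- Hg; destruct X, P, Q; unfold conic_normal, dot, vsub, xaxis, perp, Rdiv; simpl; ring.
Qed.

Lemma conic_normal_focal (X : pt) :
  dot (conic_normal e a b X) X = 1 ->
  dot (conic_normal e a b X) (conic_normal e a b X) * (a ^ 2 - dot F F)
  = 1 - dot (conic_normal e a b X) F ^ 2.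
Proof.
  destruct X as [x y]; unfold conic_normal, dot; cbn [fst snd]; intro Hc.
  rewrite HFy.
  replace (fst F * fst F + 0 * 0) with (fst F ^ 2) by ring.
  replace ((x / a ^ 2 * fst F + sgn e * y / b ^ 2 * 0) ^ 2) with (x ^ 2 / a ^ 4 * fst F ^ 2)
    by (field; lra).
  rewrite HFx.
  assert (Z : (x / a ^ 2 * (x / a ^ 2) + sgn e * y / b ^ 2 * (sgn e * y / b ^ 2))
                * (a ^ 2 - (a ^ 2 - sgn e * b ^ 2))
              - (1 - x ^ 2 / a ^ 4 * (a ^ 2 - sgn e * b ^ 2))
              = x / a ^ 2 * x + sgn e * y / b ^ 2 * y - 1)
    by (destruct e; simpl; field; lra).
  lra.
Qed.

Lemma pedal_circle (P Q M : pt) :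
  tangent_line e origin xaxis a b P Q -> on_line P Q M ->
  dot (vsub M F) (vsub Q P) = 0 -> dot M M = a ^ 2.
Proof.
  intros HT HM HMF.
  destruct (tangent_line_std P Q HT) as [HPQ [X [HX [Hc Hg]]]].
  assert (HgM : dot (conic_normal e a b X) M = 1)
    by (rewrite (on_line_dot P Q X M (conic_normal e a b X) HX HM Hg); exact Hc).
  assert (Hpar : cross (conic_normal e a b X) (vsub M F) = 0).
  { assert (Hd : dot (vsub Q P) (conic_normal e a b X) = 0) by now rewrite dot_comm.
    assert (HdMF : dot (vsub Q P) (vsub M F) = 0) by now rewrite dot_comm.
    destruct (orthogonal_pair (vsub Q P) _ _ Hd HdMF) as [E | E]; [exact E |].
    exfalso; apply HPQ; symmetry; now apply vsub_eq0. }
  assert (Hfoot := foot_on_line_norm _ _ _ HgM Hpar).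
  assert (Hfocal := conic_normal_focal X Hc).
  assert (Hpos := dot_self_pos _ _ HgM).
  apply (Rmult_eq_reg_l (dot (conic_normal e a b X) (conic_normal e a b X))); lra.
Qed.

Lemma midpoint_pedal_circle (P Q : pt) :
  tangent_line e origin xaxis a b P Q -> pdist F P = pdist F Q ->
  dot (midpoint P Q) (midpoint P Q) = a ^ 2.
Proof.
  intros HT HFPQ; apply pdist_eq_sq in HFPQ.
  apply (pedal_circle P Q); [exact HT | exists (1 / 2); pt_field |].
  assert (E : 2 * dot (vsub (midpoint P Q) F) (vsub Q P)
              = dot (vsub F Q) (vsub F Q) - dot (vsub F P) (vsub F P)) by pt_field.
  lra.
Qed.

Theorem orthocenter_distances_std (A B C H : pt) :
  nondegenerate A B C -> circumscribed e origin xaxis a b A B C ->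
  is_circumcenter A B C F -> is_orthocenter A B C H ->
  pdist A H * pdist B H * pdist C H = 8 * a * b ^ 2.
Proof.
  intros Hnd [TAB [TBC TCA]] Hcirc Horth.
  pose proof Hcirc as [HAB HBC].
  assert (MA := midpoint_pedal_circle B C TBC HBC).
  assert (MB := midpoint_pedal_circle C A TCA (eq_sym (eq_trans HAB HBC))).
  assert (MC := midpoint_pedal_circle A B TAB HAB).
  assert (HF : F = vadd A (vadd B C))
    by (apply (circumcenter_eq_of_medial A B C F Hnd Hcirc); congruence).
  assert (HH : H = vscale (-1) F)
    by (rewrite (orthocenter_eq A B C F H Hnd Hcirc Horth), HF; pt_field).
  assert (Hsum : vadd (midpoint B C) (vadd (midpoint C A) (midpoint A B)) = F)
    by (rewrite HF; pt_field).
  assert (HFF : dot F F = a ^ 2 - sgn e * b ^ 2)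
    by (unfold dot; rewrite HFy, <- HFx; ring).
  unfold pdist; apply sqrt_prod3; try apply dot_self_nonneg; [nra |].
  transitivity (64 * (dot (vadd (midpoint C A) (midpoint A B)) (vadd (midpoint C A) (midpoint A B))
                      * dot (vadd (midpoint A B) (midpoint B C)) (vadd (midpoint A B) (midpoint B C))
                      * dot (vadd (midpoint B C) (midpoint C A)) (vadd (midpoint B C) (midpoint C A)))).
  { rewrite HH, HF; pt_field. }
  rewrite (chord_sum_product _ _ _ _ MA MB MC), Hsum, HFF.
  destruct e; simpl; ring.
Qed.

End StandardPosition.

Theorem corollary5p13 (e : bool) (O u : pt) (a b : R) (A B C F H : pt) :
  central_conic e O u a b ->
  nondegenerate A B C ->
  circumscribed e O u a b A B C ->
  is_focus e O u a b F ->
  is_circumcenter A B C F ->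
  is_orthocenter A B C H ->
  pdist A H * pdist B H * pdist C H = 8 * a * b ^ 2.
Proof.
  intros Hconic Hnd [TAB [TBC TCA]] Hfoc [HAB HBC] [HA [HB HC]].
  pose proof Hconic as [Ha [Hb [Hu _]]].
  destruct (focus_coords e O u a b F Hconic Hfoc) as [HFy HFx].
  pose proof (fun P Q => pdist_coords O u P Q Hu) as Hdist.
  rewrite <- (Hdist A H), <- (Hdist B H), <- (Hdist C H).
  apply (orthocenter_distances_std e a b (coords O u F)); try assumption.
  - unfold nondegenerate; now rewrite coords_cross, Hu, Rmult_1_l.
  - split; [| split]; now apply tangent_line_coords.
  - split; now rewrite !Hdist.
  - unfold is_orthocenter; rewrite !coords_dot, Hu, HA, HB, HC; repeat split; ring.
Qed.
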